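(* (1) For every non-empty set $A$ and every mapping $\varphi: A\to\mathbb{M}_A$ in E-form, the magma $\mathbb{E}(\varphi)$ is equidecomposable. (2) Every finitely presented equidecomposable magma $M$ is isomorphic to $\mathbb{E}(\varphi)$ for some non-empty set $A$ and some mapping $\varphi: A\to \mathbb{M}_A$ in E-form.
   Context: A magma is a set with a binary operation $+$. A magma $M$ is equidecomposable if for all $x,y,x',y'\in M$, $x+y=x'+y'$ implies $x=x'$ and $y=y'$. For a non-empty set $A$, $\mathbb{M}_A$ is the free magma on $A$ (non-associative words over $A$, with $x+y=(x,y)$). For $y\in\mathbb{M}_A$, $g(y)\subseteq A$ is the set of letters of $A$ occurring in $y$. A mapping $\varphi: A\to\mathbb{M}_A$ is in E-form if it is injective and $a\in g(\varphi(a))$ for every $a\in A$. For a magma $M$, $M^2$ has the componentwise operation. A congruence on $M$ is an equivalence relation that is a submagma of $M^2$; it is closed if $(x+x',y+y')\in\theta$ implies $(x,y),(x',y')\in\theta$. For $X\subseteq M^2$, $\boxminus(X)$ is the least closed congruence on $M$ containing $X$. Regarding $\varphi$ as $\{(a,\varphi(a)):a\in A\}\subseteq\mathbb{M}_A^2$, put $\mathbb{E}(\varphi)=\mathbb{M}_A/\boxminus(\varphi)$. A presentation is a pair $(A\mid R)$ with $A$ a non-empty set and $R\subseteq\mathbb{M}_A^2$; it defines the magma $\langle A\mid R\rangle=\mathbb{M}_A/\boxminus(R)$. An equidecomposable magma $M$ is finitely presented if $M\cong\langle A\mid R\rangle$ for some presentation with $A$ and $R$ finite. *)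

From Stdlib Require Import List IndefiniteDescription.
Set Implicit Arguments.

Record magma := Magma { mcar :> Type; mop : mcar -> mcar -> mcar }.
Arguments mop {m} _ _.

Definition equidecomposable (M : magma) : Prop :=
  forall x y x' y' : M, mop x y = mop x' y' -> x = x' /\ y = y'.

Definition magma_iso {M N : magma} (f : M -> N) : Prop :=
  (forall x y : M, f (mop x y) = mop (f x) (f y)) /\
  (forall x y : M, f x = f y -> x = y) /\
  (forall z : N, exists x : M, f x = z).

Definition isomorphic (M N : magma) : Prop := exists f : M -> N, @magma_iso M N f.

Inductive word (A : Type) : Type :=
| Letter : A -> word A
| Pair : word A -> word A -> word A.

Definition free_magma (A : Type) : magma := @Magma (word A) (@Pair A).

Fixpoint occurs (A : Type) (a : A) (y : word A) : Prop :=
  match y with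
  | Letter b => a = b
  | Pair u v => occurs a u \/ occurs a v
  end.

Definition E_form (A : Type) (phi : A -> word A) : Prop :=
  (forall a b, phi a = phi b -> a = b) /\ (forall a, occurs a (phi a)).

Definition relation (M : magma) := M -> M -> Prop.

Definition is_equivalence (M : magma) (t : relation M) : Prop :=
  (forall x, t x x) /\ (forall x y, t x y -> t y x) /\
  (forall x y z, t x y -> t y z -> t x z).

Definition is_congruence (M : magma) (t : relation M) : Prop :=
  is_equivalence t /\
  (forall x y x' y', t x y -> t x' y' -> t (mop x x') (mop y y')).

Definition is_closed_congruence (M : magma) (t : relation M) : Prop :=
  is_congruence t /\
  (forall x y x' y', t (mop x x') (mop y y') -> t x y /\ t x' y').

Definition boxminus (M : magma) (X : relation M) : relation M :=
  fun x y => forall t : relation M, is_closed_congruence t ->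
    (forall p q, X p q -> t p q) -> t x y.

(** Quotient magma M / t: carrier = equivalence classes, operation via
    representatives (well defined when t is a congruence). *)
Definition qcar (M : magma) (t : relation M) : Type :=
  { P : M -> Prop | exists x : M, P = t x }.

Definition qrep (M : magma) (t : relation M) (P : qcar t) : M :=
  proj1_sig (constructive_indefinite_description _ (proj2_sig P)).

Definition qclass (M : magma) (t : relation M) (x : M) : qcar t :=
  exist (fun P => exists x0 : M, P = t x0) (t x) (ex_intro _ x eq_refl).

Definition quotient (M : magma) (t : relation M) : magma :=
  @Magma (qcar t) (fun P Q => qclass t (mop (qrep P) (qrep Q))).

Definition graph_rel (A : Type) (phi : A -> word A) : relation (free_magma A) :=
  fun x y => exists a, x = Letter a /\ y = phi a.

Definition Emagma (A : Type) (phi : A -> word A) : magma :=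
  quotient (boxminus (graph_rel phi)).

Definition presented (A : Type) (R : relation (free_magma A)) : magma :=
  quotient (boxminus R).

Definition finite_type (A : Type) : Prop := exists l : list A, forall a, In a l.

Definition finite_rel (A : Type) (R : relation (free_magma A)) : Prop :=
  exists l : list (word A * word A), forall p q, R p q <-> In (p, q) l.

Definition finitely_presented (M : magma) : Prop :=
  exists (A : Type) (R : relation (free_magma A)),
    inhabited A /\ finite_type A /\ finite_rel R /\ isomorphic M (presented R).

From Stdlib Require Import List Wf_nat ClassicalEpsilon.
From Stdlib Require Import FunctionalExtensionality PropExtensionality ProofIrrelevance.
Import ListNotations.

(* Part (1) holds because E(phi) is a quotient by a closed congruence.
   For (2), let theta be the closed congruence generated by a finite R on M_A and S the finite
   set of letters and subterms of relators. Call a class k meeting S decomposable when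
   k = l + r modulo theta with l, r meeting S; closedness makes l and r unique, so this defines a
   finite graph on classes. Cut it at a minimal set G of vertices leaving it well-founded: the new
   generators B are the classes in G and the indecomposable ones, every class unfolds into a
   unique word over B, and phi b is the unfolding of the components of b (or b itself).
   Minimality of G forces b to occur in phi b, and unfolding and evaluation are substitutions
   inverse to each other modulo the relations, hence give an isomorphism <A | R> = E(phi). *)

Section ClosedCongruence.
Context {M : magma} {X : relation M}.

Lemma boxminus_closed_congruence : is_closed_congruence (boxminus X).
Proof.
  split; [split; [split; [|split]|]|].
  - intros x t [[[Hrefl _] _] _] _; apply Hrefl.
  - intros x y Hxy t Ht HX; apply (proj1 (proj2 (proj1 (proj1 Ht)))), Hxy; assumption.
  - intros x y z Hxy Hyz t Ht HX.
    apply (proj2 (proj2 (proj1 (proj1 Ht)))) with y; [apply Hxy | apply Hyz]; assumption.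
  - intros x y x' y' Hxy Hxy' t Ht HX.
    apply (proj2 (proj1 Ht)); [apply Hxy | apply Hxy']; assumption.
  - intros x y x' y' H; split; intros t Ht HX; apply (proj2 Ht _ _ _ _ (H t Ht HX)).
Qed.

Lemma boxminus_incl {p q} : X p q -> boxminus X p q.
Proof. intros H t _ HX; apply HX, H. Qed.

Lemma boxminus_least (t : relation M) :
  is_closed_congruence t -> (forall p q, X p q -> t p q) ->
  forall x y, boxminus X x y -> t x y.
Proof. intros Ht HX x y H; apply H; assumption. Qed.

Lemma boxminus_refl x : boxminus X x x.
Proof. destruct boxminus_closed_congruence as [[[Hrefl _] _] _]; apply Hrefl. Qed.

Lemma boxminus_sym x y : boxminus X x y -> boxminus X y x.
Proof. destruct boxminus_closed_congruence as [[[_ [Hsym _]] _] _]; apply Hsym. Qed.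

Lemma boxminus_trans x y z : boxminus X x y -> boxminus X y z -> boxminus X x z.
Proof. destruct boxminus_closed_congruence as [[[_ [_ Htrans]] _] _]; apply Htrans. Qed.

End ClosedCongruence.
Arguments boxminus_closed_congruence {M} X.

Lemma boxminus_Pair {A : Type} {X : relation (free_magma A)} u v u' v' :
  boxminus X u v -> boxminus X u' v' -> boxminus X (Pair u u') (Pair v v').
Proof. destruct (boxminus_closed_congruence X) as [[_ Hmop] _]; apply Hmop. Qed.

Lemma boxminus_Pair_cancel {A : Type} {X : relation (free_magma A)} u v u' v' :
  boxminus X (Pair u u') (Pair v v') -> boxminus X u v /\ boxminus X u' v'.
Proof. destruct (boxminus_closed_congruence X) as [_ Hcancel]; apply Hcancel. Qed.

Section Quotient.
Context {M : magma} {t : relation M}.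

Lemma qclass_qrep (P : qcar t) : qclass t (qrep P) = P.
Proof.
  unfold qrep, qclass; destruct P as [P HP]; simpl.
  destruct (IndefiniteDescription.constructive_indefinite_description _ HP) as [x ->]; simpl.
  apply eq_sig_hprop; [intros; apply proof_irrelevance | reflexivity].
Qed.

Lemma qclass_onto (P : qcar t) : exists x, P = qclass t x.
Proof. exists (qrep P); symmetry; apply qclass_qrep. Qed.

Lemma qclass_eq_iff x y : is_equivalence t -> qclass t x = qclass t y <-> t x y.
Proof.
  intros [Hrefl [Hsym Htrans]]; split.
  - intros E; apply (f_equal (@proj1_sig _ _)) in E; simpl in E.
    rewrite E; apply Hrefl.
  - intros Hxy; unfold qclass; apply eq_sig_hprop; [intros; apply proof_irrelevance|]; simpl.
    extensionality z; apply propositional_extensionality; split; eauto.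
Qed.

Lemma qrep_qclass x : is_equivalence t -> t (qrep (qclass t x)) x.
Proof. intros Ht; apply qclass_eq_iff, qclass_qrep; exact Ht. Qed.

Lemma quotient_mop_qclass x y :
  is_congruence t -> mop (m := quotient t) (qclass t x) (qclass t y) = qclass t (mop x y).
Proof.
  intros [Ht Hmop]; simpl; apply qclass_eq_iff; [exact Ht|].
  apply Hmop; apply qrep_qclass, Ht.
Qed.

Lemma quotient_equidecomposable : is_closed_congruence t -> equidecomposable (quotient t).
Proof.
  intros [Ht Hcancel] P Q P' Q'.
  destruct (qclass_onto P) as [p ->], (qclass_onto Q) as [q ->].
  destruct (qclass_onto P') as [p' ->], (qclass_onto Q') as [q' ->].
  rewrite !quotient_mop_qclass by exact Ht.
  intros E; apply qclass_eq_iff in E; [|apply Ht].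
  destruct (Hcancel _ _ _ _ E); split; apply qclass_eq_iff; solve [apply Ht | assumption].
Qed.

End Quotient.

Lemma magma_iso_comp (M N P : magma) (f : M -> N) (g : N -> P) :
  magma_iso f -> magma_iso g -> magma_iso (fun x => g (f x)).
Proof.
  intros [Hf [If Sf]] [Hg [Ig Sg]]; split; [|split].
  - intros x y; rewrite Hf, Hg; reflexivity.
  - intros x y E; apply If, Ig, E.
  - intros z; destruct (Sg z) as [y <-]; destruct (Sf y) as [x <-]; exists x; reflexivity.
Qed.

Fixpoint subst {A B : Type} (f : A -> word B) (w : word A) : word B :=
  match w with
  | Letter a => f a
  | Pair u v => Pair (subst f u) (subst f v)
  end.

Lemma subst_subst {A B C : Type} (f : A -> word B) (g : B -> word C) (w : word A) :
  subst g (subst f w) = subst (fun a => subst g (f a)) w.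
Proof. induction w; simpl; congruence. Qed.

Lemma boxminus_subst {A B : Type} {R : relation (free_magma A)}
    {X : relation (free_magma B)} {f : A -> word B} :
  (forall p q, R p q -> boxminus X (subst f p) (subst f q)) ->
  forall x y, boxminus R x y -> boxminus X (subst f x) (subst f y).
Proof.
  intros Hf; apply boxminus_least; [|exact Hf].
  destruct (boxminus_closed_congruence X) as [[[Hrefl [Hsym Htrans]] Hmop] Hcancel].
  split; [split; [split; [|split]|]|]; simpl.
  - intros x; apply Hrefl.
  - intros x y; apply Hsym.
  - intros x y z; apply Htrans.
  - intros x y x' y'; apply Hmop.
  - intros x y x' y'; apply Hcancel.
Qed.

Lemma boxminus_subst_letters {A : Type} {X : relation (free_magma A)} {f : A -> word A} :
  (forall a, boxminus X (f a) (Letter a)) -> forall w, boxminus X (subst f w) w.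
Proof.
  intros Hf w; induction w as [a | u IHu v IHv]; simpl.
  - apply Hf.
  - apply boxminus_Pair; assumption.
Qed.

Lemma presented_isomorphic {A B : Type} (R : relation (free_magma A))
    (X : relation (free_magma B)) (f : A -> word B) (g : B -> word A) :
  (forall p q, R p q -> boxminus X (subst f p) (subst f q)) ->
  (forall p q, X p q -> boxminus R (subst g p) (subst g q)) ->
  (forall a, boxminus R (subst g (f a)) (Letter a)) ->
  (forall b, boxminus X (subst f (g b)) (Letter b)) ->
  isomorphic (presented R) (presented X).
Proof.
  intros Hf Hg Hgf Hfg.
  destruct (boxminus_closed_congruence R) as [HcongR _].
  destruct (boxminus_closed_congruence X) as [HcongX _].
  set (F := fun P : presented R => qclass (boxminus X) (subst f (qrep P)) : presented X).
  assert (HF : forall x, F (qclass (boxminus R) x) = qclass (boxminus X) (subst f x)).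
  { intros x; unfold F; apply qclass_eq_iff; [apply HcongX|].
    apply (boxminus_subst Hf), qrep_qclass, HcongR. }
  exists F; split; [|split].
  - intros P Q; destruct (qclass_onto P) as [p ->], (qclass_onto Q) as [q ->].
    unfold presented; rewrite !quotient_mop_qclass, !HF, quotient_mop_qclass by assumption.
    reflexivity.
  - intros P Q; destruct (qclass_onto P) as [p ->], (qclass_onto Q) as [q ->].
    rewrite !HF; intros Hpq; apply (qclass_eq_iff (t := boxminus X)) in Hpq; [|apply HcongX].
    apply qclass_eq_iff; [apply HcongR|].
    apply (boxminus_subst Hg) in Hpq; rewrite !subst_subst in Hpq.
    eapply boxminus_trans; [apply boxminus_sym, (boxminus_subst_letters Hgf) |].
    eapply boxminus_trans; [exact Hpq | apply (boxminus_subst_letters Hgf)].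
  - intros Q; destruct (qclass_onto Q) as [q ->].
    exists (qclass (boxminus R) (subst g q)); rewrite HF; apply qclass_eq_iff; [apply HcongX|].
    rewrite subst_subst; apply (boxminus_subst_letters Hfg).
Qed.

Definition classical_eq_dec {T : Type} (x y : T) : {x = y} + {x <> y} :=
  excluded_middle_informative (x = y).

Lemma minimal_sublist_exists {T : Type} (dec : forall x y : T, {x = y} + {x <> y})
    (P : list T -> Prop) {l : list T} :
  P l -> exists l', P l' /\ forall x, In x l' -> ~ P (remove dec x l').
Proof.
  remember (length l) as n eqn:Hn; revert l Hn.
  induction n as [n IH] using lt_wf_ind; intros l -> Hl.
  destruct (classic (exists x, In x l /\ P (remove dec x l))) as [[x [Hx HPx]] | Hmin].
  - exact (IH _ (remove_length_lt dec l x Hx) _ eq_refl HPx).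
  - exists l; split; [exact Hl |]; intros x Hx HPx; apply Hmin; exists x; split; assumption.
Qed.

Lemma inhabited_of_word {T : Type} : inhabited (word T) -> inhabited T.
Proof. intros [w]; induction w as [a | u IHu v _]; [exact (inhabits a) | exact IHu]. Qed.

Fixpoint subterms {A : Type} (w : word A) : list (word A) :=
  w :: match w with Letter _ => [] | Pair u v => subterms u ++ subterms v end.

Lemma subterms_self {A : Type} (w : word A) : In w (subterms w).
Proof. destruct w; left; reflexivity. Qed.

Lemma subterms_Pair {A : Type} (w u v : word A) :
  In (Pair u v) (subterms w) -> In u (subterms w) /\ In v (subterms w).
Proof.
  induction w as [a | w1 IH1 w2 IH2]; simpl; intros H.
  - destruct H as [H | []]; discriminate.
  - destruct H as [H | H].
    + injection H as <- <-; split; right; apply in_or_app; [left | right]; apply subterms_self.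
    + apply in_app_or in H; destruct H as [H | H];
        [destruct (IH1 H) | destruct (IH2 H)]; split; right; apply in_or_app; auto.
Qed.

Section FinitePresentation.
Context {A : Type} (a0 : A) {lA : list A} {R : relation (free_magma A)}
  {lR : list (word A * word A)}.
Hypothesis lA_full : forall a, In a lA.
Hypothesis lR_spec : forall p q, R p q <-> In (p, q) lR.

Local Notation th := (boxminus R).

Definition support : list (word A) :=
  map (@Letter A) lA ++ flat_map (fun pq => subterms (fst pq) ++ subterms (snd pq)) lR.

Lemma support_Letter a : In (Letter a) support.
Proof. apply in_or_app; left; apply in_map, lA_full. Qed.

Lemma support_rel {p q} : R p q -> In p support /\ In q support.
Proof.
  intros Hpq; apply lR_spec in Hpq.
  split; apply in_or_app; right; apply in_flat_map; exists (p, q);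
    (split; [exact Hpq | apply in_or_app; simpl]); [left | right]; apply subterms_self.
Qed.

Lemma support_Pair {u v} : In (Pair u v) support -> In u support /\ In v support.
Proof.
  intros H; apply in_app_or in H; destruct H as [H | H].
  - apply in_map_iff in H; destruct H as [a [H _]]; discriminate.
  - apply in_flat_map in H; destruct H as [pq [Hpq H]].
    assert (Hsub : forall w, In w (subterms (fst pq) ++ subterms (snd pq)) -> In w support)
      by (intros w Hw; apply in_or_app; right; apply in_flat_map; exists pq; split; assumption).
    apply in_app_or in H; destruct H as [H | H]; apply subterms_Pair in H;
      destruct H; split; apply Hsub, in_or_app; auto.
Qed.

(* The chosen representative depends only on the class of [s], by extensionality. *)
Definition can (s : word A) : word A :=
  epsilon (inhabits (Letter a0)) (fun k => In k support /\ th s k).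

Lemma can_spec {s} : In s support -> In (can s) support /\ th s (can s).
Proof.
  intros Hs; apply (epsilon_spec _ (fun k => In k support /\ th s k)).
  exists s; split; [exact Hs | apply boxminus_refl].
Qed.

Lemma can_eq {s t} : th s t -> can s = can t.
Proof.
  intros Hst; unfold can; f_equal.
  extensionality k; apply propositional_extensionality.
  split; intros [Hk Hsk]; split; try exact Hk.
  - eapply boxminus_trans; [apply boxminus_sym, Hst | exact Hsk].
  - eapply boxminus_trans; [exact Hst | exact Hsk].
Qed.

Definition canonical (k : word A) : Prop := In k support /\ can k = k.

Lemma canonical_can {s} : In s support -> canonical (can s).
Proof.
  intros Hs; destruct (can_spec Hs) as [Hc Hsc].
  split; [exact Hc | symmetry; apply can_eq, Hsc].
Qed.

Lemma canonical_eq {k k'} : canonical k -> canonical k' -> th k k' -> k = k'.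
Proof. intros [_ Hk] [_ Hk'] H; rewrite <- Hk, <- Hk'; apply can_eq, H. Qed.

Definition splits (k l r : word A) : Prop := canonical l /\ canonical r /\ th k (Pair l r).

Lemma splits_unique {k l r l' r'} : splits k l r -> splits k l' r' -> l = l' /\ r = r'.
Proof.
  intros [Hl [Hr Hk]] [Hl' [Hr' Hk']].
  assert (Hlr : th (Pair l r) (Pair l' r'))
    by (eapply boxminus_trans; [apply boxminus_sym, Hk | exact Hk']).
  apply boxminus_Pair_cancel in Hlr; destruct Hlr.
  split; apply canonical_eq; assumption.
Qed.

Definition decomposable (k : word A) : Prop := exists l r, splits k l r.

Definition components (k : word A) : word A * word A :=
  epsilon (inhabits (k, k)) (fun lr => splits k (fst lr) (snd lr)).

Definition lcomp (k : word A) : word A := fst (components k).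
Definition rcomp (k : word A) : word A := snd (components k).

Lemma components_spec {k} : decomposable k -> splits k (lcomp k) (rcomp k).
Proof.
  intros [l [r H]]; apply (epsilon_spec _ (fun lr => splits k (fst lr) (snd lr))).
  exists (l, r); exact H.
Qed.

Lemma components_Pair {u v} : In (Pair u v) support ->
  decomposable (can (Pair u v)) /\
  lcomp (can (Pair u v)) = can u /\ rcomp (can (Pair u v)) = can v.
Proof.
  intros Huv; destruct (support_Pair Huv) as [Hu Hv].
  assert (Hs : splits (can (Pair u v)) (can u) (can v)).
  { split; [apply canonical_can, Hu | split; [apply canonical_can, Hv |]].
    eapply boxminus_trans; [apply boxminus_sym, can_spec, Huv |].
    apply boxminus_Pair; apply can_spec; assumption. }
  assert (Hd : decomposable (can (Pair u v))) by (exists (can u), (can v); exact Hs).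
  split; [exact Hd | apply (splits_unique (components_spec Hd) Hs)].
Qed.

Definition child (G : list (word A)) (k' k : word A) : Prop :=
  canonical k /\ decomposable k /\ ~ In k G /\ (k' = lcomp k \/ k' = rcomp k).

Definition feedback_set (G : list (word A)) : Prop := forall k, Acc (child G) k.

Lemma feedback_set_support : feedback_set support.
Proof. intros k; constructor; intros k' [[Hk _] [_ [HkG _]]]; contradiction. Qed.

Section Unfolding.
Variable G : list (word A).
Hypothesis G_feedback : feedback_set G.

Definition is_leaf (k : word A) : Prop := canonical k /\ (~ decomposable k \/ In k G).
Definition leaf : Type := {k : word A | is_leaf k}.

Lemma leaf_eq (b b' : leaf) : proj1_sig b = proj1_sig b' -> b = b'.
Proof. apply eq_sig_hprop; intros; apply proof_irrelevance. Qed.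

Inductive unfolds : word A -> word leaf -> Prop :=
| unfolds_leaf k (h : is_leaf k) : unfolds k (Letter (exist _ k h))
| unfolds_node k w1 w2 : canonical k -> decomposable k -> ~ In k G ->
    unfolds (lcomp k) w1 -> unfolds (rcomp k) w2 -> unfolds k (Pair w1 w2).

Lemma unfolds_exists {k} : canonical k -> exists w, unfolds k w.
Proof.
  induction (G_feedback k) as [k _ IH]; intros Hk.
  destruct (classic (is_leaf k)) as [Hleaf | Hnode].
  - exists (Letter (exist _ k Hleaf)); constructor.
  - assert (Hd : decomposable k)
      by (apply NNPP; intros Hd; apply Hnode; split; [exact Hk | left; exact Hd]).
    assert (HG : ~ In k G) by (intros HG; apply Hnode; split; [exact Hk | right; exact HG]).
    assert (Hchild : forall k', k' = lcomp k \/ k' = rcomp k -> child G k' k)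
      by (intros k' Hk'; exact (conj Hk (conj Hd (conj HG Hk')))).
    destruct (components_spec Hd) as [Hl [Hr _]].
    destruct (IH _ (Hchild _ (or_introl eq_refl)) Hl) as [w1 H1].
    destruct (IH _ (Hchild _ (or_intror eq_refl)) Hr) as [w2 H2].
    exists (Pair w1 w2); constructor; assumption.
Qed.

Lemma unfolds_unique {k w w'} : unfolds k w -> unfolds k w' -> w = w'.
Proof.
  intros H; revert w'.
  induction H as [k h | k w1 w2 Hk Hd HG H1 IH1 H2 IH2]; intros w' H'; inversion H'.
  - f_equal; apply leaf_eq; reflexivity.
  - destruct (proj2 h); contradiction.
  - match goal with h : is_leaf k |- _ => destruct (proj2 h) end; contradiction.
  - f_equal; [apply IH1 | apply IH2]; assumption.
Qed.

Lemma unfold_inhabited : inhabited (word leaf).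
Proof.
  destruct (unfolds_exists (canonical_can (support_Letter a0))) as [w _]; exact (inhabits w).
Qed.

Definition unfold (k : word A) : word leaf := epsilon unfold_inhabited (unfolds k).

Lemma unfold_spec {k} : canonical k -> unfolds k (unfold k).
Proof. intros Hk; apply (epsilon_spec _ (unfolds k)), unfolds_exists, Hk. Qed.

Lemma unfold_leaf (b : leaf) : unfold (proj1_sig b) = Letter b.
Proof.
  destruct b as [k h]; apply (unfolds_unique (unfold_spec (proj1 h))); constructor.
Qed.

Definition phi (b : leaf) : word leaf :=
  if excluded_middle_informative (decomposable (proj1_sig b))
  then Pair (unfold (lcomp (proj1_sig b))) (unfold (rcomp (proj1_sig b)))
  else Letter b.

Definition encode (a : A) : word leaf := unfold (can (Letter a)).
Definition decode (b : leaf) : word A := proj1_sig b.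

Local Notation thE := (boxminus (graph_rel phi)).

Lemma unfolds_decode {k w} : unfolds k w -> th (subst decode w) k.
Proof.
  induction 1 as [k h | k w1 w2 Hk Hd HG H1 IH1 H2 IH2]; simpl.
  - apply boxminus_refl.
  - destruct (components_spec Hd) as [_ [_ Hsplit]].
    eapply boxminus_trans; [apply boxminus_Pair; eassumption | apply boxminus_sym, Hsplit].
Qed.

Lemma unfold_injective {k k'} : canonical k -> canonical k' -> unfold k = unfold k' -> k = k'.
Proof.
  intros Hk Hk' E; apply canonical_eq; [exact Hk | exact Hk' |].
  pose proof (unfolds_decode (unfold_spec Hk)) as Dk; rewrite E in Dk.
  eapply boxminus_trans; [apply boxminus_sym, Dk | apply unfolds_decode, unfold_spec, Hk'].
Qed.

Lemma unfold_decomposable k : canonical k -> decomposable k ->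
  thE (unfold k) (Pair (unfold (lcomp k)) (unfold (rcomp k))).
Proof.
  intros Hk Hd; destruct (classic (In k G)) as [HG | HG].
  - set (b := exist is_leaf k (conj Hk (or_intror HG)) : leaf).
    change k with (proj1_sig b); rewrite unfold_leaf.
    apply boxminus_incl; exists b; split; [reflexivity |].
    unfold phi; destruct excluded_middle_informative; [reflexivity | contradiction].
  - destruct (components_spec Hd) as [Hl [Hr _]].
    rewrite (unfolds_unique (unfold_spec Hk)
               (unfolds_node _ _ _ Hk Hd HG (unfold_spec Hl) (unfold_spec Hr))).
    apply boxminus_refl.
Qed.

Lemma subst_encode s : In s support -> thE (subst encode s) (unfold (can s)).
Proof.
  induction s as [a | u IHu v IHv]; intros Hs; simpl.
  - apply boxminus_refl.
  - destruct (support_Pair Hs) as [Hu Hv], (components_Pair Hs) as [Hd [El Er]].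
    eapply boxminus_trans; [apply boxminus_Pair; [apply IHu, Hu | apply IHv, Hv] |].
    rewrite <- El, <- Er; apply boxminus_sym, unfold_decomposable;
      [apply canonical_can, Hs | exact Hd].
Qed.

Lemma presented_iso_Emagma : isomorphic (presented R) (Emagma phi).
Proof.
  apply (presented_isomorphic _ _ encode decode).
  - intros p q Hpq; destruct (support_rel Hpq) as [Hp Hq].
    eapply boxminus_trans; [apply subst_encode, Hp |].
    rewrite (can_eq (boxminus_incl Hpq)); apply boxminus_sym, subst_encode, Hq.
  - intros x y [b [-> ->]]; simpl; unfold phi.
    destruct excluded_middle_informative as [Hd | Hd]; simpl; [| apply boxminus_refl].
    destruct (components_spec Hd) as [Hl [Hr Hsplit]].
    eapply boxminus_trans; [exact Hsplit |].
    apply boxminus_sym, boxminus_Pair; apply unfolds_decode, unfold_spec; assumption.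
  - intros a; unfold encode.
    eapply boxminus_trans; [apply unfolds_decode, unfold_spec, canonical_can, support_Letter |].
    apply boxminus_sym, can_spec, support_Letter.
  - intros b; destruct (proj1 (proj2_sig b)) as [Hb Hcan]; unfold decode.
    eapply boxminus_trans; [apply subst_encode, Hb |].
    rewrite Hcan, unfold_leaf; apply boxminus_refl.
Qed.

Lemma phi_injective b b' : phi b = phi b' -> b = b'.
Proof.
  unfold phi.
  destruct excluded_middle_informative as [Hd | Hd], excluded_middle_informative as [Hd' | Hd'];
    intros E; try discriminate.
  - injection E as El Er.
    destruct (components_spec Hd) as [Hl [Hr Hsplit]], (components_spec Hd') as [Hl' [Hr' Hsplit']].
    apply unfold_injective in El; [| assumption ..].
    apply unfold_injective in Er; [| assumption ..].
    apply leaf_eq, canonical_eq; [apply (proj2_sig b) | apply (proj2_sig b') |].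
    rewrite El, Er in Hsplit; eapply boxminus_trans; [exact Hsplit | apply boxminus_sym, Hsplit'].
  - injection E as E; exact E.
Qed.

Section Minimal.
Hypothesis G_minimal : forall {g}, In g G -> ~ feedback_set (remove classical_eq_dec g G).

Lemma unfolds_avoiding_acc {b : leaf} {j w} : unfolds j w -> ~ occurs b w ->
  Acc (child (remove classical_eq_dec (proj1_sig b) G)) j.
Proof.
  induction 1 as [j h | j w1 w2 Hj Hd HG H1 IH1 H2 IH2]; simpl; intros Hnocc.
  - constructor; intros j' [_ [Hd [HG _]]].
    destruct (proj2 h) as [Hnd | HjG]; [contradiction |].
    exfalso; apply HG, in_in_remove; [| exact HjG].
    intros E; apply Hnocc, leaf_eq; simpl; symmetry; exact E.
  - constructor; intros j' [_ [_ [_ [-> | ->]]]]; [apply IH1 | apply IH2];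
      intros Hocc; apply Hnocc; [left | right]; exact Hocc.
Qed.

Lemma feedback_set_remove {g} :
  Acc (child (remove classical_eq_dec g G)) g -> feedback_set (remove classical_eq_dec g G).
Proof.
  intros Hg j; induction (G_feedback j) as [j _ IH].
  destruct (classical_eq_dec j g) as [-> | Hne]; [exact Hg |].
  constructor; intros j' [Hj [Hd [HjG' Hj']]]; apply IH.
  refine (conj Hj (conj Hd (conj _ Hj'))).
  intros HjG; apply HjG', in_in_remove; assumption.
Qed.

Lemma phi_occurs b : occurs b (phi b).
Proof.
  unfold phi; destruct excluded_middle_informative as [Hd | Hd]; [| reflexivity].
  destruct (proj2_sig b) as [Hb [Hnd | HG]]; [contradiction |].
  apply NNPP; intros Hnocc; apply (G_minimal HG), feedback_set_remove.
  destruct (components_spec Hd) as [Hl [Hr _]].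
  constructor; intros j [_ [_ [_ [-> | ->]]]].
  - apply (unfolds_avoiding_acc (unfold_spec Hl)); intros Hocc; apply Hnocc; left; exact Hocc.
  - apply (unfolds_avoiding_acc (unfold_spec Hr)); intros Hocc; apply Hnocc; right; exact Hocc.
Qed.

Lemma phi_E_form : E_form phi.
Proof. split; [exact phi_injective | exact phi_occurs]. Qed.

End Minimal.
End Unfolding.

Lemma finitely_presented_E_form : exists (B : Type) (phi : B -> word B),
  inhabited B /\ E_form phi /\ isomorphic (presented R) (Emagma phi).
Proof.
  destruct (minimal_sublist_exists classical_eq_dec feedback_set feedback_set_support)
    as [G [HG Hmin]].
  exists (leaf G), (phi G HG); split; [| split].
  - exact (inhabited_of_word (unfold_inhabited G HG)).
  - exact (phi_E_form G HG Hmin).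
  - exact (presented_iso_Emagma G HG).
Qed.

End FinitePresentation.

Theorem theorem8p2 :
  (forall (A : Type) (phi : A -> word A),
      inhabited A -> E_form phi -> equidecomposable (Emagma phi)) /\
  (forall M : magma,
      equidecomposable M -> finitely_presented M ->
      exists (A : Type) (phi : A -> word A),
        inhabited A /\ E_form phi /\ isomorphic M (Emagma phi)).
Proof.
  split.
  - intros A phi _ _; apply quotient_equidecomposable, boxminus_closed_congruence.
  -
    intros M _ [A [R [[a0] [[lA HlA] [[lR HlR] [f Hf]]]]]].
    destruct (finitely_presented_E_form a0 HlA HlR) as [B [phi [HB [HE [g Hg]]]]].
    exists B, phi; split; [exact HB | split; [exact HE |]].
    exists (fun x => g (f x)); apply magma_iso_comp; assumption.
Qed.
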